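(* Let $\mathbb{K}$ be a field with $|\mathbb{K}|>2$ and let $(X,Z,\Xi,\Theta)$ be a dual split pre-Veronese set. Let $L_1,L_2$ be singular lines, neither contained in $Y$, meeting in exactly one point. Then either the plane $\langle L_1,L_2\rangle$ is singular, or $L_1$ and $L_2$ are contained in a unique member of $\Xi\cup\Theta$.
   Context: Let $\mathbb{K}$ be a field. For integers $R\ge1$, $V\ge -1$, an $(R,V)$-cone is a cone with a $V$-dimensional vertex (empty if $V=-1$) over a non-degenerate hyperbolic quadric in $\mathbb{P}^{2R+1}(\mathbb{K})$; the $(R,V)$-tube is the cone minus its vertex. Let $r,v,r',v'\ge -1$ be integers with $r'>r\ge1$, $d=2r+v+1$, $d'=2r'+v'+1$. Let $X,Z$ be point sets with $X\cup Z$ spanning $\mathbb{P}^N(\mathbb{K})$, $Y:=\langle Z\rangle$; $\Xi$ a family of $(d+1)$-dimensional subspaces with $|\Xi|>1$, $\Theta$ a possibly empty family of $(d'+1)$-dimensional subspaces such that: for $\xi\in\Xi$, $(X\cup Y)\cap\xi$ is an $(r,v)$-cone with vertex $Y\cap\xi$ and $X\cap\xi$ is its tube; for $\theta\in\Theta$, $(X\cup Y)\cap\theta$ is an $(r',v')$-cone $C_\theta$, $Y\cap\theta$ is a generator $M$ of $C_\theta$, $Z\cap\theta$ is the disjoint union of the vertex $V_\theta$ and an $r'$-space of $M$ complementary to $V_\theta$, and $X\cap\theta=C_\theta\setminus M$. A subspace is singular if all its points lie in $X\cup Y$; two points are collinear if the joining line is singular. Axioms: (S1) any two distinct points of $X\cup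 Z$ lie in a common member of $\Xi\cup\Theta$; (S2) the intersection of two distinct members of $\Xi\cup\Theta$ is singular. A dual split pre-Veronese set (pre-DSV) is such a quadruple satisfying (S1) and (S2). *)

From HB Require Import structures.
From mathcomp Require Import all_boot all_order all_algebra.
Set Implicit Arguments. Unset Strict Implicit. Unset Printing Implicit Defensive.
Import GRing.Theory Num.Theory.
Local Open Scope ring_scope.

(* Projective space P^N(K) is modelled by the K-vector space 'rV[K]_(N+1):
   a projective subspace of projective dimension k is a vector subspace of
   dimension k+1 (a {vspace _}); points are 1-dimensional subspaces.
   A point set is a predicate on subspaces, only ever evaluated at points. *)

Section ProjectiveSetting.
Variables (K : fieldType) (N : nat).
Local Notation V := 'rV[K]_N.+1.

Definition pset := {vspace V} -> Prop.

Definition is_point (p : {vspace V}) : Prop := \dim p = 1%N.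
Definition is_line (L : {vspace V}) : Prop := \dim L = 2%N.

Definition is_span (Z : pset) (Y : {vspace V}) : Prop :=
  (forall p, is_point p -> Z p -> (p <= Y)%VS) /\
  (forall U : {vspace V}, (forall p, is_point p -> Z p -> (p <= U)%VS) -> (Y <= U)%VS).

Definition hyp_form (R : nat) (a : 'rV[K]_(R.*2.+2)) : K :=
  \sum_(i < R.+1) a 0 (inord (i.*2)) * a 0 (inord (i.*2.+1)).

(* C (a point set in the subspace xi) is an (R,v)-cone with vertex W:
   W has projective dimension v, and there is a linear map f mapping xi onto
   K^(2R+2) with kernel (in xi) W such that the points of C are exactly the
   points <x> of xi with hyp_form (f x) = 0 (cone with vertex W over a
   non-degenerate hyperbolic quadric of P^(2R+1)). *)
Definition is_cone (R : nat) (v : int) (xi W : {vspace V}) (C : pset) : Prop :=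
  (\dim W)%:Z = v + 1 /\ (W <= xi)%VS /\
  (forall p, is_point p -> C p -> (p <= xi)%VS) /\
  exists f : 'Hom(V, 'rV[K]_(R.*2.+2)),
    (f @: xi)%VS = fullv /\ (xi :&: lker f)%VS = W /\
    forall p, is_point p -> (p <= xi)%VS ->
      (C p <-> forall x, x \in p -> hyp_form (f x) = 0).

(* M is a generator (maximal singular subspace, of projective dimension R+v+1)
   of the (R,v)-cone C with vertex W *)
Definition is_generator (R : nat) (v : int) (C : pset) (W M : {vspace V}) : Prop :=
  (W <= M)%VS /\ (\dim M)%:Z = R%:Z + v + 2 /\
  (forall p, is_point p -> (p <= M)%VS -> C p).

Definition singular (X : pset) (Y S : {vspace V}) : Prop :=
  forall p, is_point p -> (p <= S)%VS -> X p \/ (p <= Y)%VS.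

Definition dd (r : nat) (v : int) : int := 2 * r%:Z + v + 1.

Definition pre_DSV (r : nat) (v : int) (r' : nat) (v' : int)
    (X Z : pset) (Y : {vspace V}) (Xi Theta : {vspace V} -> Prop) : Prop :=
  (forall U : {vspace V},
     (forall p, is_point p -> X p \/ Z p -> (p <= U)%VS) -> U = fullv) /\
  is_span Z Y /\
  (exists xi1 xi2, Xi xi1 /\ Xi xi2 /\ xi1 <> xi2) /\
  (forall xi, Xi xi ->
     (\dim xi)%:Z = dd r v + 2 /\
     let C := fun p => (p <= xi)%VS /\ (X p \/ (p <= Y)%VS) in
     is_cone r v xi (Y :&: xi)%VS C /\
     (forall p, is_point p -> (p <= xi)%VS ->
        (X p <-> C p /\ ~ (p <= Y :&: xi)%VS))) /\
  (forall th, Theta th ->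
     (\dim th)%:Z = dd r' v' + 2 /\
     let C := fun p => (p <= th)%VS /\ (X p \/ (p <= Y)%VS) in
     exists Vt M S : {vspace V},
       is_cone r' v' th Vt C /\
       is_generator r' v' C Vt M /\
       (Y :&: th)%VS = M /\
       (S <= M)%VS /\ \dim S = r'.+1 /\
       (S :&: Vt)%VS = 0%VS /\ (S + Vt)%VS = M /\
       (forall p, is_point p -> (p <= th)%VS ->
          (Z p <-> (p <= Vt)%VS \/ (p <= S)%VS)) /\
       (forall p, is_point p -> (p <= th)%VS ->
          (X p <-> C p /\ ~ (p <= M)%VS))) /\
  (forall p q, is_point p -> is_point q -> X p \/ Z p -> X q \/ Z q -> p <> q ->
     exists mu, (Xi mu \/ Theta mu) /\ (p <= mu)%VS /\ (q <= mu)%VS) /\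
  (forall mu1 mu2, Xi mu1 \/ Theta mu1 -> Xi mu2 \/ Theta mu2 -> mu1 <> mu2 ->
     singular X Y (mu1 :&: mu2)%VS).

End ProjectiveSetting.

From HB Require Import structures.
From mathcomp Require Import all_boot all_order all_algebra.
From mathcomp Require Import ring.
From Stdlib Require Import Classical.
Import GRing.Theory Num.Theory.
Set Implicit Arguments. Unset Strict Implicit.
Local Open Scope ring_scope.

(* Suppose the plane L1 + L2 contains a vector z = u1 + u2 (u1 in L1,
   u2 in L2) whose point is not in X u Y.  The affine parametrisations
   A t = u1 + t x of L1 and B t = u2 - t x of L2 satisfy A t + B t = z and
   meet Y at most once each, so (as |K| > 2) we find t with <A t>, <B t> in X;
   by (S1) some member mu contains them.  Choosing further t' <> t and
   s <> t in the same way gives a member nu through <A t'> and <B s>.  In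
   the quadric of mu, A t and B t are singular while z = A t + B t is not;
   hence every other point of the secant <A t, B t> is non-singular, in
   particular w = (s-t) A t + (t'-t) B t, which also lies in nu.  By (S2)
   mu = nu, so mu contains two points of each line, hence L1 and L2.
   Uniqueness follows from (S2) again, applied to the point <z>. *)

Section LinesInVectorSpaces.
Variables (K : fieldType) (vT : vectType K).
Implicit Types (L U : {vspace vT}) (x u : vT).

Lemma line_span L x u :
  \dim L = 2%N -> x \in L -> u \in L -> x != 0 -> u \notin <[x]>%VS ->
  L = (<[x]> + <[u]>)%VS.
Proof.
move=> dL xL uL x0 ux; apply/eqP; rewrite eq_sym eqEdim subv_add -!memvE xL uL dL /=.
have [le eq] := dimv_leqif_eq (addvSl <[x]> <[u]>).
rewrite dim_vline x0 in le eq; rewrite ltn_neqAle eq le andbT.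
apply/eqP => E; have := memv_add (mem0v <[x]>%VS) (memv_line u).
by rewrite add0r -E => h; rewrite h in ux.
Qed.

Lemma affine_points_span L U x u t t' :
  \dim L = 2%N -> x \in L -> u \in L -> x != 0 -> u \notin <[x]>%VS ->
  t != t' -> u + t *: x \in U -> u + t' *: x \in U -> (L <= U)%VS.
Proof.
move=> dL xL uL x0 ux tt' h h'.
have xU : x \in U.
  have : (t - t') *: x \in U.
    suff -> : (t - t') *: x = (u + t *: x) - (u + t' *: x) by rewrite memvB.
    by rewrite opprD addrACA subrr add0r scalerBl.
  by rewrite rpredZeq subr_eq0 (negbTE tt').
have uU : u \in U by rewrite -(addrK (t *: x) u) memvB // memvZ.
by rewrite (line_span dL xL uL x0 ux) subv_add -!memvE xU uU.
Qed.

End LinesInVectorSpaces.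

Lemma avoid_two_subsingletons (K : fieldType) (P Q : K -> Prop) :
  (exists a : K, a != 0 /\ a != 1) ->
  (forall t t', P t -> P t' -> t = t') -> (forall t t', Q t -> Q t' -> t = t') ->
  exists t, ~ P t /\ ~ Q t.
Proof.
move=> [a [a0 a1]] uP uQ; apply: NNPP => none.
have cover t : P t \/ Q t.
  by apply: NNPP => h; apply: none; exists t; split => h'; apply: h; [left|right].
have e01 : (0 : K) <> 1 by move/eqP; rewrite eq_sym oner_eq0.
have e0a : (0 : K) <> a by move/eqP; rewrite eq_sym (negbTE a0).
have e1a : (1 : K) <> a by move/eqP; rewrite eq_sym (negbTE a1).
have := cover 0; have := cover 1; have := cover a.
have := uP 0 1; have := uP 0 a; have := uP 1 a.
have := uQ 0 1; have := uQ 0 a; have := uQ 1 a.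
tauto.
Qed.

Section HyperbolicForm.
Variables (K : fieldType) (R : nat).
Implicit Types (a b : 'rV[K]_(R.*2.+2)).

Definition hyp_bil a b : K :=
  \sum_(i < R.+1) (a 0 (inord (i.*2)) * b 0 (inord (i.*2.+1))
                   + b 0 (inord (i.*2)) * a 0 (inord (i.*2.+1))).

Lemma hyp_formZ a (k : K) : hyp_form (k *: a) = k ^+ 2 * hyp_form a.
Proof. by rewrite /hyp_form mulr_sumr; apply: eq_bigr => i _; rewrite !mxE; ring. Qed.

Lemma hyp_form_comb a b (k l : K) :
  hyp_form (k *: a + l *: b) =
  k ^+ 2 * hyp_form a + l ^+ 2 * hyp_form b + k * l * hyp_bil a b.
Proof.
rewrite /hyp_form /hyp_bil !mulr_sumr -!big_split /=.
by apply: eq_bigr => i _; rewrite !mxE; ring.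
Qed.

End HyperbolicForm.

Section PointsOfProjectiveSpace.
Variables (K : fieldType) (N : nat).
Local Notation V := 'rV[K]_N.+1.
Implicit Types (X : pset K N) (Y S p mu : {vspace V}) (u x : V).

(* the point spanned by u lies in X u Y (trivially true for u = 0) *)
Definition singular_pt X Y u : Prop := X <[u]>%VS \/ (<[u]> <= Y)%VS.

Lemma singular_pt0 X Y : singular_pt X Y 0.
Proof. by right; rewrite -memvE mem0v. Qed.

Lemma is_point_line u : u != 0 -> is_point <[u]>%VS.
Proof. by rewrite /is_point dim_vline => ->. Qed.

Lemma point_eq_line p x : is_point p -> x \in p -> x != 0 -> p = <[x]>%VS.
Proof.
by move=> dp xp x0; apply/eqP; rewrite eq_sym eqEdim -memvE xp dim_vline x0 dp.
Qed.

Lemma singular_mem X Y S u : singular X Y S -> u \in S -> singular_pt X Y u.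
Proof.
move=> sS uS; have [->|u0] := eqVneq u 0; first exact: singular_pt0.
by apply: sS; [exact: is_point_line | rewrite -memvE].
Qed.

Lemma not_singular_witness X Y S :
  ~ singular X Y S -> exists2 z, z \in S & ~ singular_pt X Y z.
Proof.
move=> nS; apply: NNPP => none; apply: nS => p pp pS.
have z0 : vpick p != 0 by rewrite vpick0 -dimv_eq0 pp.
rewrite (point_eq_line pp (memv_pick p) z0); apply: NNPP => h; apply: none.
by exists (vpick p) => //; apply: (subvP pS); exact: memv_pick.
Qed.

Definition quadric_on X Y mu : Prop :=
  exists R (f : 'Hom(V, 'rV[K]_(R.*2.+2))), forall u, u \in mu -> u != 0 ->
    (singular_pt X Y u <-> hyp_form (f u) = 0).

Lemma cone_quadric R v X Y mu W :
  is_cone R v mu W (fun p => (p <= mu)%VS /\ (X p \/ (p <= Y)%VS)) ->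
  quadric_on X Y mu.
Proof.
move=> [_ [_ [_ [f [_ [_ Hf]]]]]]; exists R, f => u umu u0.
have mu_u : (<[u]> <= mu)%VS by rewrite -memvE.
have [toQ ofQ] := Hf _ (is_point_line u0) mu_u; split.
- by move=> su; apply: toQ (conj mu_u su) _ (memv_line u).
- move=> Qu; apply: (proj2 (ofQ _)) => y /vlineP [k ->].
  by rewrite linearZ hyp_formZ Qu mulr0.
Qed.

Lemma quadric_secant X Y mu a b (k l : K) :
  quadric_on X Y mu -> a \in mu -> b \in mu -> a != 0 -> b != 0 ->
  singular_pt X Y a -> singular_pt X Y b -> ~ singular_pt X Y (a + b) ->
  k != 0 -> l != 0 -> ~ singular_pt X Y (k *: a + l *: b).
Proof.
move=> [R [f Hf]] amu bmu a0 b0 sa sb nsab k0 l0.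
have Qa := (Hf _ amu a0).1 sa; have Qb := (Hf _ bmu b0).1 sb.
have ab0 : a + b != 0 by apply: contra_not_neq nsab => ->; exact: singular_pt0.
have Qab : hyp_form (f (a + b)) != 0.
  by apply/eqP => Q0; apply: nsab; apply: (Hf _ (memvD amu bmu) ab0).2.
have Qw : hyp_form (f (k *: a + l *: b)) = k * l * hyp_form (f (a + b)).
  rewrite !linearD !linearZ /= -[f a]scale1r -[f b]scale1r !hyp_form_comb.
  by rewrite !scale1r Qa Qb; ring.
have Qw0 : hyp_form (f (k *: a + l *: b)) != 0 by rewrite Qw !mulf_neq0.
have w0 : k *: a + l *: b != 0.
  by apply: contra_neq Qw0 => ->; rewrite linear0 /hyp_form big1 // => i _; rewrite mxE mul0r.
move/(Hf _ (memvD (memvZ _ amu) (memvZ _ bmu)) w0).1; exact/eqP.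
Qed.

End PointsOfProjectiveSpace.

Section PreDSVAxioms.
Variables (K : fieldType) (N : nat) (r r' : nat) (v v' : int).
Variables (X Z : pset K N) (Y : {vspace 'rV[K]_N.+1}).
Variables (Xi Theta : {vspace 'rV[K]_N.+1} -> Prop).
Hypothesis dsv : pre_DSV r v r' v' X Z Y Xi Theta.

Lemma pre_DSV_quadric mu : Xi mu \/ Theta mu -> quadric_on X Y mu.
Proof.
have [_ [_ [_ [HXi [HTh _]]]]] := dsv.
case=> [/HXi | /HTh]; cbv zeta.
- by case=> _ [cone _]; exact: cone_quadric cone.
- by case=> _ [Vt [_ [_ [cone _]]]]; exact: cone_quadric cone.
Qed.

Lemma pre_DSV_join u w :
  u != 0 -> w != 0 -> X <[u]>%VS -> X <[w]>%VS -> <[u]>%VS <> <[w]>%VS ->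
  exists mu, (Xi mu \/ Theta mu) /\ u \in mu /\ w \in mu.
Proof.
have [_ [_ [_ [_ [_ [S1 _]]]]]] := dsv.
move=> u0 w0 Xu Xw uw; have [mu [Hmu [umu wmu]]] :=
  S1 _ _ (is_point_line u0) (is_point_line w0) (or_introl Xu) (or_introl Xw) uw.
by exists mu; rewrite !memvE.
Qed.

Lemma pre_DSV_meet mu nu w :
  Xi mu \/ Theta mu -> Xi nu \/ Theta nu -> w \in mu -> w \in nu ->
  ~ singular_pt X Y w -> mu = nu.
Proof.
have [_ [_ [_ [_ [_ [_ S2]]]]]] := dsv.
move=> Hmu Hnu wmu wnu nsw; apply: NNPP => munu; apply: nsw.
by apply: singular_mem (S2 _ _ Hmu Hnu munu) _; rewrite memv_cap wmu wnu.
Qed.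

End PreDSVAxioms.

(* The core argument, for an abstract family Mem of subspaces ("members")
   carrying quadrics and satisfying (S1) on X and (S2). *)
Section PlaneThroughNonSingularPoint.
Variables (K : fieldType) (N : nat).
Local Notation V := 'rV[K]_N.+1.
Variables (X : pset K N) (Y : {vspace V}) (Mem : {vspace V} -> Prop).
Hypothesis K_gt2 : exists a : K, a != 0 /\ a != 1.
Hypothesis quadM : forall mu, Mem mu -> quadric_on X Y mu.
Hypothesis joinM : forall u w, u != 0 -> w != 0 -> X <[u]>%VS -> X <[w]>%VS ->
  <[u]>%VS <> <[w]>%VS -> exists mu, Mem mu /\ u \in mu /\ w \in mu.
Hypothesis meetM : forall mu nu w, Mem mu -> Mem nu -> w \in mu -> w \in nu ->
  ~ singular_pt X Y w -> mu = nu.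

Variables (L1 L2 : {vspace V}) (x u1 u2 : V).
Hypotheses (line1 : is_line L1) (line2 : is_line L2).
Hypotheses (sing1 : singular X Y L1) (sing2 : singular X Y L2).
Hypotheses (notY1 : ~ (L1 <= Y)%VS) (notY2 : ~ (L2 <= Y)%VS).
Hypotheses (meet12 : (L1 :&: L2)%VS = <[x]>%VS) (x0 : x != 0).
Hypotheses (u1L1 : u1 \in L1) (u2L2 : u2 \in L2).
Hypothesis nonsing : ~ singular_pt X Y (u1 + u2).

Let A t := u1 + t *: x.
Let B t := u2 + (- t) *: x.

Let AB_sum t : A t + B t = u1 + u2.
Proof. by rewrite addrACA -scalerDl subrr scale0r addr0. Qed.

Let x_in12 : x \in L1 /\ x \in L2.
Proof. by apply/memv_capP; rewrite meet12 memv_line. Qed.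

(* u1, u2 lie off <x>: otherwise u1 + u2 would lie on the singular L2 (L1) *)
Let u1_off : u1 \notin <[x]>%VS.
Proof.
apply/negP => u1x; apply: nonsing; apply: singular_mem sing2 _.
by rewrite memvD //; move: u1x; rewrite -meet12 => /memv_capP [].
Qed.

Let u2_off : u2 \notin <[x]>%VS.
Proof.
apply/negP => u2x; apply: nonsing; apply: singular_mem sing1 _.
by rewrite memvD //; move: u2x; rewrite -meet12 => /memv_capP [].
Qed.

Let A_L1 t : A t \in L1.
Proof. by rewrite memvD // memvZ //; case: x_in12. Qed.

Let B_L2 t : B t \in L2.
Proof. by rewrite memvD // memvZ //; case: x_in12. Qed.

Let off_x u c : u \notin <[x]>%VS -> u + c *: x \notin <[x]>%VS.
Proof.
apply: contra => ucx.
by rewrite -(addrK (c *: x) u) memvB // memvZ // memv_line.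
Qed.

Let A_neq0 t : A t != 0.
Proof. by apply: contraNneq (off_x t u1_off) => At0; rewrite -/(A t) At0 mem0v. Qed.

Let B_neq0 t : B t != 0.
Proof. by apply: contraNneq (off_x (- t) u2_off) => Bt0; rewrite -/(B t) Bt0 mem0v. Qed.

Let A_Y_once t t' : A t \in Y -> A t' \in Y -> t = t'.
Proof.
move=> At At'; apply/eqP; apply: contraT => tt'; exfalso; apply: notY1.
by case: x_in12 => xL1 _; exact: affine_points_span line1 xL1 u1L1 x0 u1_off tt' At At'.
Qed.

Let B_Y_once t t' : B t \in Y -> B t' \in Y -> t = t'.
Proof.
move=> Bt Bt'; apply/eqP; apply: contraT => tt'; exfalso; apply: notY2.
have nt : - t != - t' by rewrite eqr_opp.
by case: x_in12 => _ xL2; exact: affine_points_span line2 xL2 u2L2 x0 u2_off nt Bt Bt'.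
Qed.

Let A_X t : A t \notin Y -> X <[A t]>%VS.
Proof. by move=> /negP AY; case: (singular_mem sing1 (A_L1 t)); rewrite -?memvE. Qed.

Let B_X t : B t \notin Y -> X <[B t]>%VS.
Proof. by move=> /negP BY; case: (singular_mem sing2 (B_L2 t)); rewrite -?memvE. Qed.

(* <A t> and <B s> are distinct points, as their only common point is <x> *)
Let A_neq_B t s : <[A t]>%VS <> <[B s]>%VS.
Proof.
move=> AB; have : A t \in (L1 :&: L2)%VS.
  by rewrite memv_cap A_L1 memvE AB -memvE B_L2.
by rewrite meet12 (negbTE (off_x t u1_off)).
Qed.

Let member_through t s : A t \notin Y -> B s \notin Y ->
  exists mu, Mem mu /\ A t \in mu /\ B s \in mu.
Proof. by move=> At Bs; exact: joinM (A_neq0 t) (B_neq0 s) (A_X At) (B_X Bs) (@A_neq_B t s). Qed.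

(* the secant argument: members through {<A t>, <B t>} and {<A t'>, <B s>}
   share the non-singular point (s-t) A t + (t'-t) B t, hence coincide *)
Let secant_members_eq mu nu t t' s :
  Mem mu -> A t \in mu -> B t \in mu -> A t \notin Y -> B t \notin Y ->
  Mem nu -> A t' \in nu -> B s \in nu -> t' != t -> s != t -> mu = nu.
Proof.
move=> Mmu Atmu Btmu AtY BtY Mnu At'nu Bsnu t't st.
have wE : (s - t) *: A t + (t' - t) *: B t = (s - t) *: A t' + (t' - t) *: B s.
  rewrite /A /B !scalerDr !scalerA addrACA [RHS]addrACA; congr (_ + _).
  by rewrite -!scalerDl; congr (_ *: _); ring.
apply: (meetM Mmu Mnu (w := (s - t) *: A t + (t' - t) *: B t)).
- by rewrite memvD // memvZ.
- by rewrite wE memvD // memvZ.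
- apply: quadric_secant (quadM Mmu) Atmu Btmu (A_neq0 t) (B_neq0 t) _ _ _ _ _.
  + by left; exact: A_X.
  + by left; exact: B_X.
  + by rewrite AB_sum.
  + by rewrite subr_eq0.
  + by rewrite subr_eq0.
Qed.

Lemma plane_in_member : exists mu, Mem mu /\ (L1 <= mu)%VS /\ (L2 <= mu)%VS.
Proof.
have [t [/negP AtY /negP BtY]] := avoid_two_subsingletons K_gt2 A_Y_once B_Y_once.
have eq_t a b : a = t -> b = t -> a = b by move=> -> ->.
have [t' [/negP At'Y /eqP t't]] :=
  avoid_two_subsingletons (Q := eq^~ t) K_gt2 A_Y_once eq_t.
have [s [/negP BsY /eqP st]] :=
  avoid_two_subsingletons (Q := eq^~ t) K_gt2 B_Y_once eq_t.
have [mu [Mmu [Atmu Btmu]]] := member_through AtY BtY.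
have [nu [Mnu [At'nu Bsnu]]] := member_through At'Y BsY.
have munu := secant_members_eq Mmu Atmu Btmu AtY BtY Mnu At'nu Bsnu t't st.
rewrite -munu in At'nu Bsnu; exists mu; split=> //.
have [xL1 xL2] := x_in12; split.
- by apply: affine_points_span line1 xL1 u1L1 x0 u1_off t't At'nu Atmu.
- have nst : - s != - t by rewrite eqr_opp.
  by apply: affine_points_span line2 xL2 u2L2 x0 u2_off nst Bsnu Btmu.
Qed.

End PlaneThroughNonSingularPoint.

Theorem lemma4p3 (K : fieldType) (N : nat) (r r' : nat) (v v' : int)
    (X Z : pset K N) (Y : {vspace 'rV[K]_N.+1})
    (Xi Theta : {vspace 'rV[K]_N.+1} -> Prop)
    (L1 L2 : {vspace 'rV[K]_N.+1}) :
  (exists a : K, a != 0 /\ a != 1) ->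
  (1 <= r)%N -> (r < r')%N -> -1 <= v -> -1 <= v' ->
  pre_DSV r v r' v' X Z Y Xi Theta ->
  is_line L1 -> is_line L2 ->
  singular X Y L1 -> singular X Y L2 ->
  ~ (L1 <= Y)%VS -> ~ (L2 <= Y)%VS ->
  is_point (L1 :&: L2)%VS ->
  singular X Y (L1 + L2)%VS \/
  exists! mu, (Xi mu \/ Theta mu) /\ (L1 <= mu)%VS /\ (L2 <= mu)%VS.
Proof.
move=> K_gt2 _ _ _ _ dsv line1 line2 sing1 sing2 notY1 notY2 meet_pt.
have [plane_sing | plane_nsing] := classic (singular X Y (L1 + L2)%VS); [by left | right].
have [z zL12 nsz] := not_singular_witness plane_nsing.
have [u1 u1L1 [u2 u2L2 zE]] := memv_addP zL12.
set x := vpick (L1 :&: L2)%VS.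
have x0 : x != 0 by rewrite vpick0 -dimv_eq0 meet_pt.
have meet12 := point_eq_line meet_pt (memv_pick _) x0.
have nsu : ~ singular_pt X Y (u1 + u2) by rewrite -zE.
have [mu [mu_mem [L1mu L2mu]]] := plane_in_member K_gt2 (pre_DSV_quadric dsv)
  (pre_DSV_join dsv) (pre_DSV_meet dsv) line1 line2 sing1 sing2 notY1 notY2
  meet12 x0 u1L1 u2L2 nsu.
exists mu; split=> // mu' [mu'_mem [L1mu' L2mu']].
have z_mu : z \in mu by apply: subvP zL12; rewrite subv_add L1mu L2mu.
have z_mu' : z \in mu' by apply: subvP zL12; rewrite subv_add L1mu' L2mu'.
by have := pre_DSV_meet dsv mu_mem mu'_mem z_mu z_mu' nsz.
Qed.
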